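(* Let $t>0$, $a=(a_1,a_2,a_3):=(0,t,1/t)$, and let $\beta=\beta(t)\in(0,1)$ be defined by $\frac{t+i}{t-i}=e^{2\pi i\beta}$. Let $\mu$ be a real number and suppose there is a constant $C>0$ such that $$\left|\beta-\frac{n}{m}\right|\geq\frac{C}{m^\mu}\quad\text{for all } n,m\in\mathbb Z,\ m\ne0.$$ Then there is a constant $D>0$ such that $$\left|\det M_{m,2,a}\right|\geq\frac{D}{m^{2\mu-2}}\quad\text{for all integers } m\ge1.$$
   Context: For real $s$, $A(s):=\frac{s+i}{s-i}$, and $A_j:=A(a_j)$. For $m\ge0$, $M_{m,2,a}$ is the $4\times4$ matrix with rows $(1,1,1,1)$ and $(1,A_j,A_j^{m+3},A_j^{m+4})$ for $j=1,2,3$. *)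

From HB Require Import structures.
From mathcomp Require Import all_boot all_order all_algebra.
From mathcomp Require Import all_classical all_reals all_analysis.
From mathcomp Require Import complex.

Set Implicit Arguments. Unset Strict Implicit. Unset Printing Implicit Defensive.
Import Order.TTheory GRing.Theory Num.Theory.
Local Open Scope ring_scope.
Local Open Scope complex_scope.

Definition Amob (R : realType) (s : R) : R[i] := (s%:C + 'i) / (s%:C - 'i).

Definition Mmat (R : realType) (m : nat) (a1 a2 a3 : R) : 'M[R[i]]_4 :=
  \matrix_(r < 4, k < 4)
    if r == 0 :> nat then 1
    else let x := Amob (if r == 1 :> nat then a1 else if r == 2 :> nat then a2 else a3) in
         if k == 0 :> nat then 1
         else if k == 1 :> nat then x
         else if k == 2 :> nat then x ^+ (m + 3)
         else x ^+ (m + 4).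

Definition expi (R : realType) (th : R) : R[i] := (cos th) +i* (sin th).

(* With z := A(t) = e^{2 pi i beta} we have A(0) = -1 and A(1/t) = -1/z, so det M_{m,2,a}
   is an explicit Laurent polynomial in z: up to a unimodular factor it is
   -2 (z^{m+3} - 1)^2 (1 + z^2) for odd m and 4 (z^{m+4} - 1)(z^{m+2} - 1) for even m.
   Each factor |z^N - 1| = 2 |sin (pi N beta)| is at least 2 ||N beta|| (Jordan's
   inequality), and the Diophantine hypothesis bounds ||N beta|| = N |beta - n/N| below by
   C N^{1-mu}.  Since N ranges over m + 2, m + 3, m + 4, both products are bounded below by a
   constant times m^{2(1-mu)}; 1 + z^2 is nonzero because z^4 = 1 would violate the same
   bound. *)

From HB Require Import structures.
From mathcomp Require Import all_boot all_order all_algebra.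
From mathcomp Require Import all_classical all_reals all_analysis.
From mathcomp Require Import complex.
From mathcomp Require Import ring lra.

Set Implicit Arguments.
Unset Strict Implicit.
Unset Printing Implicit Defensive.

Import Order.TTheory GRing.Theory Num.Theory.
Local Open Scope ring_scope.
Local Open Scope complex_scope.

Lemma det_mx4 (F : comPzRingType) (e : nat -> nat -> F) :
  \det (\matrix_(i < 4, j < 4) e i j) =
    e 0 0 * e 1 1 * e 2 2 * e 3 3 - e 0 0 * e 1 1 * e 2 3 * e 3 2
  - e 0 0 * e 1 2 * e 2 1 * e 3 3 + e 0 0 * e 1 2 * e 2 3 * e 3 1
  + e 0 0 * e 1 3 * e 2 1 * e 3 2 - e 0 0 * e 1 3 * e 2 2 * e 3 1
  - e 1 0 * e 0 1 * e 2 2 * e 3 3 + e 1 0 * e 0 1 * e 2 3 * e 3 2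
  + e 1 0 * e 0 2 * e 2 1 * e 3 3 - e 1 0 * e 0 2 * e 2 3 * e 3 1
  - e 1 0 * e 0 3 * e 2 1 * e 3 2 + e 1 0 * e 0 3 * e 2 2 * e 3 1
  + e 2 0 * e 0 1 * e 1 2 * e 3 3 - e 2 0 * e 0 1 * e 1 3 * e 3 2
  - e 2 0 * e 0 2 * e 1 1 * e 3 3 + e 2 0 * e 0 2 * e 1 3 * e 3 1
  + e 2 0 * e 0 3 * e 1 1 * e 3 2 - e 2 0 * e 0 3 * e 1 2 * e 3 1
  - e 3 0 * e 0 1 * e 1 2 * e 2 3 + e 3 0 * e 0 1 * e 1 3 * e 2 2
  + e 3 0 * e 0 2 * e 1 1 * e 2 3 - e 3 0 * e 0 2 * e 1 3 * e 2 1
  - e 3 0 * e 0 3 * e 1 1 * e 2 2 + e 3 0 * e 0 3 * e 1 2 * e 2 1.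
Proof.
rewrite (expand_det_col _ ord0) /cofactor !big_ord_recl big_ord0.
rewrite !(expand_det_row _ ord0) /cofactor !big_ord_recl !big_ord0.
rewrite !(expand_det_row _ ord0) /cofactor !big_ord_recl !big_ord0.
by rewrite !det_mx11 !mxE /= /bump /=; ring.
Qed.

Section GapMatrix.
Variables (F : fieldType) (m : nat).

Definition gapmx_entry (x1 x2 x3 : F) (r k : nat) : F :=
  if r == 0 then 1 else
  let x := if r == 1 then x1 else if r == 2 then x2 else x3 in
  if k == 0 then 1 else if k == 1 then x
  else if k == 2 then x ^+ (m + 3) else x ^+ (m + 4).

Definition gapmx (x1 x2 x3 : F) : 'M[F]_4 :=
  \matrix_(r < 4, k < 4) gapmx_entry x1 x2 x3 r k.

Variable z : F.
Hypothesis z_neq0 : z != 0.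

Lemma det_gapmx_odd : odd m ->
  \det (gapmx (-1) z (- z^-1)) =
    - 2 * (z ^+ (m + 3) - 1) ^+ 2 * (1 + z ^+ 2) / z ^+ (m + 4).
Proof.
move=> m_odd; rewrite det_mx4 /gapmx_entry /=.
have sign3 : (-1) ^+ (m + 3) = 1 :> F by rewrite -signr_odd oddD m_odd.
have sign4 : (-1) ^+ (m + 4) = -1 :> F by rewrite addnS exprS sign3 mulr1.
have zm_neq0 : z ^+ (m + 3) != 0 by rewrite expf_neq0.
rewrite !(exprNn z^-1) sign3 sign4 !exprVn (addnS m 3) exprS; move: zm_neq0.
set y := z ^+ (m + 3) => y_neq0.
by field; rewrite y_neq0 z_neq0.
Qed.

Lemma det_gapmx_even : ~~ odd m ->
  \det (gapmx (-1) z (- z^-1)) =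
    4 * (z ^+ (m + 4) - 1) * (z ^+ (m + 2) - 1) / z ^+ (m + 3).
Proof.
move=> m_even; rewrite det_mx4 /gapmx_entry /=.
have sign2 : (-1) ^+ (m + 2) = 1 :> F by rewrite -signr_odd oddD (negbTE m_even).
have sign3 : (-1) ^+ (m + 3) = -1 :> F by rewrite addnS exprS sign2 mulr1.
have sign4 : (-1) ^+ (m + 4) = 1 :> F by rewrite addnS exprS sign3 mulrN1 opprK.
have zm_neq0 : z ^+ (m + 2) != 0 by rewrite expf_neq0.
rewrite !(exprNn z^-1) sign3 sign4 !exprVn (addnS m 3) (addnS m 2) !exprS.
move: zm_neq0; set y := z ^+ (m + 2) => y_neq0.
by field; rewrite y_neq0 z_neq0.
Qed.

End GapMatrix.

Lemma Mmat_gapmx (R : realType) (m : nat) (a1 a2 a3 : R) :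
  Mmat m a1 a2 a3 = gapmx m (Amob a1) (Amob a2) (Amob a3).
Proof.
(* Rewrite each side separately: a plain [rewrite !mxE] tries to unify the two
   non-convertible entry functions and effectively never returns. *)
apply/matrixP => i j; rewrite [LHS]mxE [RHS]mxE /gapmx_entry.
by case: i => [[|[|[|[|?]]]] ?].
Qed.

Section Cayley.
Variable R : realType.

Lemma real_addi_neq0 (s : R) : s%:C + 'i != 0.
Proof. by apply/eqP => /(congr1 (@complex.Im R)) /= /eqP; rewrite add0r oner_eq0. Qed.

Lemma real_subi_neq0 (s : R) : s%:C - 'i != 0.
Proof.
by apply/eqP => /(congr1 (@complex.Im R)) /= /eqP; rewrite sub0r oppr_eq0 oner_eq0.
Qed.

Lemma Amob0 : Amob (0 : R) = -1.
Proof.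
have := real_addi_neq0 0; rewrite rmorph0 add0r => i_neq0.
by rewrite /Amob rmorph0 add0r sub0r invrN mulrN divff.
Qed.

Lemma AmobV (t : R) : t != 0 -> Amob t^-1 = - (Amob t)^-1.
Proof.
move=> t_neq0; rewrite /Amob invf_div -mulNr.
apply/eqP; rewrite eqr_div ?real_addi_neq0 ?real_subi_neq0 //.
have tC_neq0 : t%:C != 0 by rewrite fmorph_eq0.
rewrite fmorphV -subr_eq0; apply/eqP.
have -> : ((t%:C)^-1 + 'i) * (t%:C + 'i) - - (t%:C - 'i) * ((t%:C)^-1 - 'i)
   = 2 * (1 + 'i ^+ 2) by field.
by rewrite sqr_i subrr mulr0.
Qed.

End Cayley.

Section JordanInequality.
Variable R : realType.

Lemma sin_le_mulr2n (y : R) : 0 <= y <= pi -> sin (y *+ 2) <= sin y *+ 2.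
Proof.
move=> y_0pi; rewrite sin_mulr2n lerMn2r /= mulrC ler_piMr ?cos_le1 //.
exact: sin_ge0_pi.
Qed.

Lemma sin_pi4_ge_half : 1 / 2 <= sin (pi / 4 : R).
Proof.
have pi_gt0 := pi_gt0 R.
have : sin (pi / 2) <= sin (pi / 4) *+ 2 :> R.
  rewrite (_ : pi / 2 = (pi / 4) *+ 2); last by rewrite -mulr_natr; field.
  by apply: sin_le_mulr2n; apply/andP; split; lra.
by rewrite sin_pihalf mulr2n; lra.
Qed.

Lemma sin_ge_divpi_pi4 (y : R) : pi / 4 <= y <= pi / 2 -> y / pi <= sin y.
Proof.
move=> /andP[y_ge y_le]; have pi_gt0 := pi_gt0 R.
have : y / pi <= 1 / 2 by rewrite ler_pdivrMr //; lra.
have : sin (pi / 4) <= sin y.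
  have [<- //|y_neq] := eqVneq (pi / 4) y.
  apply/ltW; rewrite ltr_sin ?in_itv /=; first by rewrite lt_neqAle y_neq.
    by apply/andP; split; lra.
  by apply/andP; split; lra.
by have := sin_pi4_ge_half; lra.
Qed.

(* Doubling [y] until it lands in [pi/4, pi/2]: by [sin_le_mulr2n] the ratio
   [sin y / y] can only decrease along the way. *)
Lemma sin_ge_divpi_pow2 (k : nat) (y : R) :
  pi / 2 ^+ k.+2 <= y <= pi / 2 -> y / pi <= sin y.
Proof.
have pi_gt0 := pi_gt0 R.
elim: k y => [|k IHk] y /andP[y_ge y_le].
  by rewrite expr2 in y_ge; apply: sin_ge_divpi_pi4; apply/andP; split; lra.
have [y_ge4|y_lt4] := lerP (pi / 4) y; first by apply: sin_ge_divpi_pi4; rewrite y_ge4.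
have y_gt0 : 0 < y by apply: lt_le_trans y_ge; rewrite divr_gt0 ?exprn_gt0.
have double_y : pi / 2 ^+ k.+2 <= y *+ 2 <= pi / 2.
  have half : pi / 2 ^+ k.+3 = (pi / 2 ^+ k.+2) / 2 :> R.
    by rewrite [in LHS]exprS; field; rewrite gt_eqF ?exprn_gt0.
  rewrite half in y_ge.
  by apply/andP; split; rewrite mulr2n; lra.
have sin_double : sin (y *+ 2) <= sin y *+ 2.
  by apply: sin_le_mulr2n; apply/andP; split; lra.
have := IHk _ double_y; rewrite mulr2n mulrDl; rewrite mulr2n in sin_double.
lra.
Qed.

Lemma sin_ge_divpi (y : R) : 0 <= y <= pi / 2 -> y / pi <= sin y.
Proof.
move=> /andP[y_ge0 y_le]; have pi_gt0 := pi_gt0 R.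
have [->|y_neq0] := eqVneq y 0; first by rewrite mul0r sin0.
have y_gt0 : 0 < y by rewrite lt_neqAle eq_sym y_neq0.
pose k := Num.truncn (pi / y).
apply: (@sin_ge_divpi_pow2 k); rewrite y_le andbT ler_pdivrMr ?exprn_gt0 //.
have pi_lt : pi < k.+1%:R * y by rewrite -ltr_pdivrMr // truncnS_gt.
have k_le : (k.+1%:R : R) <= 2 ^+ k.+2.
  rewrite -natrX ler_nat (leq_trans (ltnW (ltn_expl _ (ltnSn 1)))) //.
  by rewrite leq_exp2l.
nra.
Qed.

Lemma norm_sin_pi_ge (d : R) : `|d| <= 1 / 2 -> `|d| <= `|sin (pi * d)|.
Proof.
wlog d_ge0 : d / 0 <= d.
  move=> wlog_d; have [|d_lt0] := lerP 0 d; first exact: wlog_d.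
  have := wlog_d (- d); rewrite oppr_ge0 normrN mulrN sinN normrN; apply.
  exact: ltW.
rewrite ger0_norm // => d_le; have pi_gt0 := pi_gt0 R.
have sin_ge : d <= sin (pi * d).
  rewrite -[X in X <= _](mulKf (lt0r_neq0 pi_gt0)) mulrC.
  by apply: sin_ge_divpi; apply/andP; split; nra.
exact: le_trans sin_ge (ler_norm _).
Qed.

Lemma dist_nat_le_norm_sin (x : R) : 0 <= x ->
  exists n : nat, `|x - n%:R| <= `|sin (pi * x)|.
Proof.
move=> x_ge0; pose n := Num.truncn (x + 1 / 2); exists n.
have /andP[n_le n_gt] : n%:R <= x + 1 / 2 < n.+1%:R by apply: truncn_itv; lra.
have sinE : sin (pi * x) = (-1) ^+ n * sin (pi * (x - n%:R)).
  by rewrite -(alternatingn (@sinDpi R)) mulrBr mulr_natr subrK.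
rewrite sinE normrMsign; apply: norm_sin_pi_ge.
by rewrite ler_norml; rewrite -[n.+1]addn1 natrD in n_gt; apply/andP; split; lra.
Qed.

End JordanInequality.

Section Expi.
Variable R : realType.
Implicit Types a b : R.

Lemma expiD a b : expi a * expi b = expi (a + b).
Proof.
rewrite /expi sinD cosD; apply/eqP; rewrite eq_complex /=.
by apply/andP; split; apply/eqP; ring.
Qed.

Lemma expiX a n : expi a ^+ n = expi (n%:R * a).
Proof.
elim: n => [|n IHn]; first by rewrite mul0r /expi cos0 sin0.
by rewrite exprS IHn expiD mulrSr mulrDl mul1r addrC.
Qed.

Lemma norm_expi a : `|expi a| = 1.
Proof. by rewrite normc_def /= cos2Dsin2 sqrtr1. Qed.

Lemma norm_expi_sub1 a : `|expi a - 1| = (2 * `|sin (a / 2)|)%:C.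
Proof.
rewrite normc_def /= subr0; congr (_%:C).
set b := a / 2; have -> : a = b *+ 2 by rewrite /b -mulr_natr mulfVK // pnatr_eq0.
have -> : (cos (b *+ 2) - 1) ^+ 2 + sin (b *+ 2) ^+ 2 = (2 * sin b) ^+ 2.
  rewrite cos_mulr2n sin_mulr2n; apply/eqP; rewrite -subr_eq0; apply/eqP.
  have -> : (cos b ^+ 2 *+ 2 - 1 - 1) ^+ 2 + (cos b * sin b *+ 2) ^+ 2 - (2 * sin b) ^+ 2
    = 4 * (cos b ^+ 2 - 1) * (cos b ^+ 2 + sin b ^+ 2 - 1) by ring.
  by rewrite cos2Dsin2 subrr mulr0.
by rewrite sqrtr_sqr normrM ger0_norm.
Qed.

End Expi.

Definition dioph_lower_bound (R : realType) (mu C beta : R) :=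
  forall n m : int, m != 0 -> C / (`|m|%:~R `^ mu) <= `|beta - n%:~R / m%:~R|.

Lemma norm_expiX_sub1_ge (R : realType) (beta mu C : R) (N : nat) :
  (0 < N)%N -> 0 <= beta -> dioph_lower_bound mu C beta ->
  (2 * C * N%:R `^ (1 - mu))%:C <= `|expi (2 * pi * beta) ^+ N - 1|.
Proof.
move=> N_gt0 beta_ge0 dioph; have N_pos : (0 : R) < N%:R by rewrite ltr0n.
rewrite expiX norm_expi_sub1 lecR -mulrA ler_pM2l //.
have -> : N%:R * (2 * pi * beta) / 2 = pi * (N%:R * beta) :> R by field.
have [n dist_n] := dist_nat_le_norm_sin (mulr_ge0 (ltW N_pos) beta_ge0).
apply: le_trans dist_n.
have := dioph n N; rewrite eqz_nat -lt0n N_gt0 => /(_ isT).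
change (C / N%:R `^ mu <= `|beta - n%:R / N%:R| ->
        C * N%:R `^ (1 - mu) <= `|N%:R * beta - n%:R|).
have -> : N%:R * beta - n%:R = N%:R * (beta - n%:R / N%:R).
  by rewrite mulrBr mulrCA divff ?mulr1 // lt0r_neq0.
rewrite normrM (ger0_norm (ltW N_pos)).
rewrite powRB ?lt0r_neq0 ?implybT // powRr1 ?(ltW N_pos) // mulrCA.
by rewrite ler_pM2l.
Qed.

Lemma powR_ge_min_mul (R : realType) (e k x y : R) :
  0 < x -> x <= y -> y <= k * x -> Num.min 1 (k `^ e) * x `^ e <= y `^ e.
Proof.
move=> x_gt0 x_le_y y_le_kx.
have y_gt0 : 0 < y := lt_le_trans x_gt0 x_le_y.
have k_gt0 : 0 < k by rewrite -(pmulr_lgt0 _ x_gt0) (lt_le_trans y_gt0).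
have [e_ge0|e_lt0] := lerP 0 e.
  have nnegx : x \in Num.nneg by rewrite nnegrE ltW.
  have nnegy : y \in Num.nneg by rewrite nnegrE ltW.
  apply: le_trans (ge0_ler_powR e_ge0 nnegx nnegy x_le_y).
  by rewrite ler_piMl ?powR_ge0 // ge_min lexx.
apply: (@le_trans _ _ (k `^ e * x `^ e)).
  by rewrite ler_wpM2r ?powR_ge0 // ge_min lexx orbT.
rewrite -powRM ?(ltW k_gt0) ?(ltW x_gt0) // -[e]opprK !(powRN _ (- e)).
rewrite lef_pV2 ?posrE ?powR_gt0 ?mulr_gt0 //.
apply: ge0_ler_powR; rewrite ?nnegrE ?oppr_ge0 ?(ltW e_lt0) ?(ltW y_gt0) //.
by rewrite mulr_ge0 ?ltW.
Qed.

Section GapDetLowerBound.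
Variables (R : realType) (z : R[i]) (c e : R).
Hypotheses (norm_z : `|z| = 1) (c_gt0 : 0 < c).
Hypothesis gap : forall m j, (1 <= m)%N -> (j <= 4)%N ->
  (c * m%:R `^ e)%:C <= `|z ^+ (m + j) - 1|.

Let z_neq0 : z != 0.
Proof. by rewrite -normr_eq0 norm_z oner_eq0. Qed.

Let bound_ge0 m : 0 <= (c * m%:R `^ e)%:C.
Proof. by rewrite ler0c mulr_ge0 ?powR_ge0 ?ltW. Qed.

Lemma add1_sqr_neq0 : 1 + z ^+ 2 != 0.
Proof.
apply/eqP; rewrite addrC => /eqP; rewrite addr_eq0 => /eqP z2_eqN1.
have := @gap 1 3 (leqnn 1) isT.
rewrite (_ : z ^+ (1 + 3) = 1) ?subrr ?normr0 ?lecR ?powR1 ?mulr1 ?leNgt ?c_gt0 //.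
by rewrite (exprM z 2 2) z2_eqN1 sqrrN expr1n.
Qed.

Lemma det_gapmx_odd_ge m : (1 <= m)%N -> odd m ->
  2 * `|1 + z ^+ 2| * (c * m%:R `^ e)%:C ^+ 2 <= `|\det (gapmx m (-1) z (- z^-1))|.
Proof.
move=> m_ge1 m_odd; rewrite det_gapmx_odd // !normrM normfV normrN normr_nat.
rewrite normrX norm_z expr1n invr1 mulr1 [X in _ <= X]mulrAC expr2.
by apply: ler_wpM2l; [rewrite mulr_ge0 | apply: ler_pM; rewrite ?gap].
Qed.

Lemma det_gapmx_even_ge m : (1 <= m)%N -> ~~ odd m ->
  4 * (c * m%:R `^ e)%:C ^+ 2 <= `|\det (gapmx m (-1) z (- z^-1))|.
Proof.
move=> m_ge1 m_even; rewrite det_gapmx_even // !normrM normfV normr_nat.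
rewrite normrX norm_z expr1n invr1 mulr1 -mulrA expr2.
by apply: ler_wpM2l; [rewrite ler0n | apply: ler_pM; rewrite ?gap].
Qed.

Lemma det_gapmx_ge : exists2 D, 0 < D & forall m, (1 <= m)%N ->
  (D * (m%:R `^ e) ^+ 2)%:C <= `|\det (gapmx m (-1) z (- z^-1))|.
Proof.
pose K := complex.Re `|1 + z ^+ 2|.
have KE : `|1 + z ^+ 2| = K%:C by rewrite /K normc_def.
have K_gt0 : 0 < K by rewrite -ltcR -KE normr_gt0 add1_sqr_neq0.
have min_gt0 : 0 < Num.min (2 * K) 4 by rewrite lt_min mulr_gt0 ?ltr0n.
exists (Num.min (2 * K) 4 * c ^+ 2); first by rewrite mulr_gt0 ?exprn_gt0.
move=> m m_ge1; rewrite -mulrA -exprMn.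
have [m_odd|m_even] := boolP (odd m).
  apply: le_trans (det_gapmx_odd_ge m_ge1 m_odd).
  rewrite KE (_ : 2 * K%:C * _ = (2 * K * (c * m%:R `^ e) ^+ 2)%:C) ?lecR; last first.
    by rewrite !expr2 !rmorphM rmorph_nat.
  by rewrite ler_wpM2r ?sqr_ge0 // ge_min lexx.
apply: le_trans (det_gapmx_even_ge m_ge1 m_even).
rewrite (_ : 4 * _ = (4 * (c * m%:R `^ e) ^+ 2)%:C) ?lecR; last first.
  by rewrite !expr2 !rmorphM rmorph_nat.
by rewrite ler_wpM2r ?sqr_ge0 // ge_min lexx orbT.
Qed.

End GapDetLowerBound.

Theorem proposition6p2 (R : realType) (t beta mu : R) :
  0 < t ->
  0 < beta < 1 ->
  Amob t = expi (2 * pi * beta) ->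
  (exists C : R, 0 < C /\
     forall n m : int, m != 0 ->
       C / ((`|m|%:~R : R) `^ mu) <= `|beta - n%:~R / m%:~R|) ->
  exists D : R, 0 < D /\
    forall m : nat, (1 <= m)%N ->
      ((D / ((m%:R : R) `^ (2 * mu - 2)))%:C <= `|\det (Mmat m 0 t t^-1)|)%R.
Proof.
move=> t_gt0 /andP[beta_gt0 _] At [C [C_gt0 dioph]].
pose z := expi (2 * pi * beta); pose e := 1 - mu.
(* the exponents N = m + j with j <= 4 all lie in [m, 5m] *)
pose c := 2 * C * Num.min 1 (5 `^ e).
have c_gt0 : 0 < c by rewrite !mulr_gt0 // lt_min ltr01 powR_gt0.
have gap m j : (1 <= m)%N -> (j <= 4)%N -> (c * m%:R `^ e)%:C <= `|z ^+ (m + j) - 1|.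
  move=> m_ge1 j_le4; have mj_gt0 : (0 < m + j)%N by rewrite addn_gt0 m_ge1.
  apply: le_trans (norm_expiX_sub1_ge mj_gt0 (ltW beta_gt0) dioph).
  rewrite lecR /c -!mulrA ler_pM2l ?ltr0n // ler_pM2l //.
  apply: powR_ge_min_mul; rewrite ?ltr0n ?ler_nat ?leq_addr //.
  by rewrite -natrM ler_nat mulSn leq_add2l (leq_trans j_le4) // leq_pmulr.
have [D D_gt0 detD] := @det_gapmx_ge R z c e (norm_expi _) c_gt0 gap.
exists D; split=> [//|m m_ge1].
rewrite Mmat_gapmx Amob0 AmobV ?lt0r_neq0 // At.
have -> : 2 * mu - 2 = - (e + e) by rewrite /e; lra.
rewrite powRN invrK powRD ?pnatr_eq0 -?lt0n ?m_ge1 ?implybT // -expr2.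
exact: detD.
Qed.
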